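(* For every positive integer $n$, the set $\overline{\mathcal{H}}_{n}=\{\gamma\in\mathcal{H}_{n}\mid \pi(\gamma)\in\mathcal{H}_{n-1}\}$ is not empty.
   Context: For a positive integer $n$ and $\gamma=(\gamma_1,\ldots,\gamma_n)\in\mathbb{R}^n$, let $P_\gamma(s)=s^n+\sum_{k=1}^{n}\gamma_k s^{n-k}$. A polynomial is called Hurwitz if all its roots have strictly negative real part. Let $\mathcal{H}_n=\{\gamma\in\mathbb{R}^n\mid P_\gamma \text{ is Hurwitz}\}$. Let $\pi:\mathbb{R}^n\to\mathbb{R}^{n-1}$ be the projection $\pi(\gamma)=(\gamma_1,\ldots,\gamma_{n-1})$, so that $P_{\pi(\gamma)}(s)=s^{n-1}+\sum_{k=1}^{n-1}\gamma_k s^{n-1-k}$. (For $n=1$, $\mathbb{R}^0$ is a point, $P_{\pi(\gamma)}=1$ has no roots and is regarded as Hurwitz, so $\mathcal{H}_0=\mathbb{R}^0$.) *)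

From HB Require Import structures.
From mathcomp Require Import all_boot all_order all_algebra.
From mathcomp Require Import complex.
Set Implicit Arguments. Unset Strict Implicit. Unset Printing Implicit Defensive.
Import Order.TTheory GRing.Theory Num.Theory.
Local Open Scope ring_scope.
Local Open Scope complex_scope.
Import ComplexField.

(* Coefficient vector gamma = (gamma_1,...,gamma_n) is stored as g : 'rV[R]_n
   with gamma_{k+1} = g 0 k  (0-based index k). *)

Definition Pgam (R : nzRingType) (n : nat) (g : 'rV[R]_n) : {poly R} :=
  'X^n + \sum_(k < n) (g 0 k)%:P * 'X^(n - k.+1).

Definition hurwitz (R : rcfType) (p : {poly R}) : Prop :=
  forall z : R[i], root (map_poly (fun x : R => (x%:C)%C) p) z -> Re z < 0.

Definition Hset (R : rcfType) (n : nat) : 'rV[R]_n -> Prop :=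
  fun g => hurwitz (Pgam g).

Definition proj (R : nzRingType) (n : nat) (g : 'rV[R]_n.+1) : 'rV[R]_n :=
  \row_(k < n) g 0 (widen_ord (leqnSn n) k).

Definition Hbar (R : rcfType) (n : nat) : 'rV[R]_n.+1 -> Prop :=
  fun g => Hset g /\ Hset (proj g).

(** The binomial coefficients of (s + 1)^n give a witness.  Then P_gamma = (s + 1)^n
    has the single root -1, and P_{pi(gamma)} = ((s + 1)^n - 1)/s, whose roots z
    satisfy |z + 1| = 1 and z <> 0 (its constant coefficient is n).  On the circle
    |z + 1| = 1 one has 2 Re z = -|z|^2, which is negative away from the origin. *)

From mathcomp Require Import all_boot all_order all_algebra.
From mathcomp Require Import complex.
From mathcomp Require Import reals.
From mathcomp Require Import lra zify.
Import Order.TTheory GRing.Theory Num.Theory.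
Local Open Scope ring_scope.

Section MapPgam.
Variables (R S : nzRingType) (f : {rmorphism R -> S}).

Lemma map_Pgam n (g : 'rV[R]_n) : map_poly f (Pgam g) = Pgam (map_mx f g).
Proof.
rewrite /Pgam rmorphD rmorph_sum /= map_polyXn; congr (_ + _).
by apply: eq_bigr => k _; rewrite rmorphM /= map_polyC map_polyXn mxE.
Qed.

Lemma map_proj n (g : 'rV[R]_n.+1) : map_mx f (proj g) = proj (map_mx f g).
Proof. by apply/rowP => k; rewrite !mxE. Qed.

End MapPgam.

Definition binomial_row (R : nzRingType) (m : nat) : 'rV[R]_m.+1 :=
  \row_(k < m.+1) ('C(m.+1, m - k))%:R.

Lemma map_binomial_row (R S : nzRingType) (f : {rmorphism R -> S}) m :
  map_mx f (binomial_row R m) = binomial_row S m.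
Proof. by apply/rowP => k; rewrite !mxE rmorph_nat. Qed.

Section BinomialRow.
Variable R : comNzRingType.

Lemma Pgam_binomial_row m : Pgam (binomial_row R m) = ('X + 1) ^+ m.+1.
Proof.
rewrite /Pgam exprD1n [RHS]big_ord_recr /= binn mulr1n addrC; congr (_ + _).
rewrite (reindex_inj rev_ord_inj) /=; apply: eq_bigr => k _.
rewrite mxE polyC_natr mulr_natl; have := ltn_ord k => hk.
by congr ('X^_ *+ 'C(_, _)) => /=; lia.
Qed.

Lemma Pgam_proj_binomial_row m :
  Pgam (proj (binomial_row R m)) = \sum_(j < m.+1) 'C(m.+1, j.+1)%:R *: 'X^j.
Proof.
rewrite /Pgam [RHS]big_ord_recr /= binn scale1r addrC; congr (_ + _).
rewrite (reindex_inj rev_ord_inj) /=; apply: eq_bigr => k _.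
rewrite !mxE mul_polyC /=; have := ltn_ord k => hk.
by congr ('C(_, _)%:R *: 'X^_); lia.
Qed.

Lemma mulX_Pgam_proj_binomial_row m :
  'X * Pgam (proj (binomial_row R m)) = ('X + 1) ^+ m.+1 - 1.
Proof.
rewrite Pgam_proj_binomial_row exprD1n [in RHS]big_ord_recl /= expr0 bin0 mulr1n.
rewrite [1 + _]addrC addrK mulr_sumr; apply: eq_bigr => j _.
by rewrite -scalerAr -exprS scaler_nat /bump add1n.
Qed.

Lemma Pgam_proj_binomial_row0 m :
  (Pgam (proj (binomial_row R m))).[0] = m.+1%:R.
Proof.
rewrite Pgam_proj_binomial_row horner_sum big_ord_recl /= hornerZ hornerXn.
rewrite expr0 mulr1 bin1 big1 ?addr0 // => j _.
by rewrite hornerZ hornerXn expr0n mulr0.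
Qed.

End BinomialRow.

Section ComplexRoots.
Variable R : rcfType.

Lemma Re_lt0_of_norm_addr1 (z : R[i]) : z != 0 -> `|z + 1| = 1 -> 'Re z < 0.
Proof.
move=> z_neq0 norm1; rewrite -complexRe ltcR.
have circle : complex.Re (z + 1) ^+ 2 + complex.Im (z + 1) ^+ 2 = 1.
  by apply: complexI; rewrite add_Re2_Im2 norm1 expr1n.
have : 0 < complex.Re z ^+ 2 + complex.Im z ^+ 2.
  by rewrite -ltcR add_Re2_Im2 exprn_gt0 ?normr_gt0.
move: circle; rewrite !raddfD /= addr0 !expr2 => circle.
nra.
Qed.

Lemma Pgam_binomial_row_roots m (z : R[i]) :
  root (Pgam (binomial_row R[i] m)) z -> 'Re z < 0.
Proof.
rewrite Pgam_binomial_row /root !hornerE expf_eq0 addr_eq0 => /andP[_ /eqP ->].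
by rewrite -complexRe ltcR /= ltrN10.
Qed.

Lemma Pgam_proj_binomial_row_roots m (z : R[i]) :
  root (Pgam (proj (binomial_row R[i] m))) z -> 'Re z < 0.
Proof.
move=> rootQ; apply: Re_lt0_of_norm_addr1.
  by apply: contraTneq rootQ => ->; rewrite /root Pgam_proj_binomial_row0 pnatr_eq0.
have /eqP := congr1 (horner^~ z) (mulX_Pgam_proj_binomial_row R[i] m).
rewrite hornerM hornerX (rootP rootQ) mulr0 !hornerE eq_sym subr_eq0 => /eqP unit_pow.
by apply/eqP; rewrite -(pexpr_eq1 (n := m.+1)) ?normr_ge0 // -normrX unit_pow normr1.
Qed.

End ComplexRoots.

Theorem lemma1 (R : realType) (m : nat) : exists g : 'rV[R]_m.+1, Hbar g.
Proof.
exists (binomial_row R m); split=> z; rewrite map_Pgam ?map_proj map_binomial_row.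
- exact: Pgam_binomial_row_roots.
- exact: Pgam_proj_binomial_row_roots.
Qed.
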